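(* Let $n$ be a positive integer and $\lambda$ an infinite cardinal. For every $d$-feebly compact shift-continuous $T_1$-topology $\tau$ on the semilattice $\exp_n\lambda$, a point $x$ is isolated in $(\exp_n\lambda,\tau)$ if and only if $x\in\exp_n\lambda\setminus\exp_{n-1}\lambda$.
   Context: For a positive integer $n$ and a cardinal $\lambda$, $\exp_n\lambda=\{A\subseteq\lambda\colon |A|\leqslant n\}$, regarded as a semilattice under the operation $\cap$ (so $\exp_0\lambda=\{\varnothing\}$). A topology $\tau$ on a semilattice $S$ is shift-continuous if the semilattice operation is separately continuous, i.e. $(S,\tau)$ is a semitopological semilattice. A topological space is $d$-feebly compact if every discrete family of open subsets of it is finite. *)

From HB Require Import structures.
From mathcomp Require Import all_boot all_order.
From mathcomp Require Import finmap.
From mathcomp Require Import boolp classical_sets cardinality.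
Set Implicit Arguments. Unset Strict Implicit. Unset Printing Implicit Defensive.
Local Open Scope fset_scope.
Local Open Scope classical_set_scope.

(* exp_n L : subsets of L with at most n elements (L models the cardinal lambda) *)
Definition exp_n (L : choiceType) (n : nat) := {A : {fset L} | (#|` A| <= n)%N}.

Lemma exp_meet_subproof (L : choiceType) (n : nat) (A B : exp_n L n) :
  (#|` (fsetI (val A) (val B))| <= n)%N.
Proof.
apply: leq_trans (valP A); apply: fsubset_leq_card; exact: fsubsetIl.
Qed.

Definition exp_meet (L : choiceType) (n : nat) (A B : exp_n L n) : exp_n L n :=
  exist _ (fsetI (val A) (val B)) (exp_meet_subproof A B).

Definition is_topology (X : Type) (tau : set (set X)) : Prop :=
  [/\ tau setT,
      (forall U V, tau U -> tau V -> tau (U `&` V)) &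
      (forall (F : set (set X)), F `<=` tau -> tau (\bigcup_(U in F) U))].

Definition T1_topology (X : Type) (tau : set (set X)) : Prop :=
  forall x y : X, x <> y -> exists U, [/\ tau U, U x & ~ U y].

Definition tcontinuous (X : Type) (tau : set (set X)) (f : X -> X) : Prop :=
  forall U, tau U -> tau (f @^-1` U).

Definition shift_continuous (L : choiceType) (n : nat) (tau : set (set (exp_n L n))) :=
  forall a : exp_n L n,
    tcontinuous tau (fun x => exp_meet a x) /\ tcontinuous tau (fun x => exp_meet x a).

Definition discrete_family (X : Type) (tau : set (set X)) (F : set (set X)) : Prop :=
  forall x : X, exists U, [/\ tau U, U x &
    forall V W, F V -> F W -> V `&` U !=set0 -> W `&` U !=set0 -> V = W].

Definition d_feebly_compact (X : Type) (tau : set (set X)) : Prop :=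
  forall F : set (set X), F `<=` tau -> discrete_family tau F -> finite_set F.

Definition isolated (X : Type) (tau : set (set X)) (x : X) : Prop := tau [set x].

From HB Require Import structures.
From mathcomp Require Import all_boot all_order.
From mathcomp Require Import finmap.
From mathcomp Require Import boolp classical_sets cardinality functions.
Set Implicit Arguments. Unset Strict Implicit.
Local Open Scope fset_scope.
Local Open Scope classical_set_scope.

(* Separate continuity of [y |-> {a} ∩ y] together with T1 makes every
   upper set [{y | z ⊆ y}] open; for [|z| = n] this set is [{z}], so full
   points are isolated.  If [|x| < n] and [x] were isolated, extend [x] by
   infinitely many pairwise disjoint blocks of size [n - |x|] avoiding [x]:
   the resulting full points [w_i] are isolated and form a discrete family of
   open sets (a point [z ⊉ x] is separated from all of them through
   [y |-> x ∩ y], the point [x] by the open set [{x}], and a point [z ⊋ x] by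
   its upper set, which contains [w_i] only for the one block meeting
   [z \ x]), contradicting d-feeble compactness. *)

Section Topology.
Variables (X : Type) (tau : set (set X)).

Lemma open_setT : is_topology tau -> tau setT.
Proof. by case. Qed.

Lemma open_setI U V : is_topology tau -> tau U -> tau V -> tau (U `&` V).
Proof. by case=> _ + _; apply. Qed.

Definition discrete_seq (w : nat -> X) :=
  forall x, exists U, [/\ tau U, U x & forall i j, U (w i) -> U (w j) -> i = j].

Lemma discrete_family_range_set1 w :
  discrete_seq w -> discrete_family tau (range (fun i => [set w i])).
Proof.
move=> dw x; have [U [tU Ux Uw]] := dw x; exists U; split=> //.
by move=> _ _ [i _ <-] [j _ <-] [_ [/= -> Ui]] [_ [/= -> Uj]]; rewrite (Uw _ _ Ui Uj).
Qed.

Lemma d_feebly_compact_discrete_seq w : d_feebly_compact tau ->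
  injective w -> (forall i, tau [set w i]) -> ~ discrete_seq w.
Proof.
move=> dfc w_inj w_open /discrete_family_range_set1 /dfc fin_range.
have set1w_inj : injective (fun i => [set w i]).
  by move=> i j eq_ij; apply: w_inj; have : [set w j] (w i) by rewrite -eq_ij.
apply: infinite_nat; rewrite -(eq_finite_set (inj_card_eq (in2W set1w_inj))).
by apply: fin_range => _ [i _ <-].
Qed.

End Topology.

Lemma infinite_set_injseq (T : Type) (A : set T) : infinite_set A ->
  exists f : nat -> T, injective f /\ forall i, A (f i).
Proof.
move/infiniteP/card_leP => -[f].
exists (fun i => val (f (SigSub (mem_set (I : setT i))))); split; last first.
  by move=> i; exact: set_valP.
move=> i j /val_inj /(@inj _ _ _ f).
by rewrite !inE => /(_ I I) /(congr1 val).
Qed.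

Lemma infinite_disjoint_fsets (T : choiceType) (B : {fset T}) m :
  infinite_set [set: T] ->
  exists A : nat -> {fset T}, [/\ forall i, #|` A i| = m,
    forall i, [disjoint A i & B]%fset &
    forall i j b, b \in A i -> b \in A j -> i = j].
Proof.
move=> T_inf; have [f [f_inj fB]] := infinite_set_injseq (infinite_setD T_inf (finite_fset B)).
pose A i := [fset f (i * m + val k)%N | k : 'I_m].
have memA i b : b \in A i -> exists k : 'I_m, b = f (i * m + k)%N.
  by case/imfsetP => k _ ->; exists k.
exists A; split.
- move=> i; rewrite card_imfset ?size_enum_ord //.
  by move=> k k' /f_inj /addnI /val_inj.
- move=> i; apply/fdisjointP => _ /memA [k ->].
  by have [_ /negP] := fB (i * m + k)%N.
- move=> i j _ /memA [k ->] /memA [k' /f_inj /(congr1 (divn^~ m))].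
  have blockE l (r : 'I_m) : ((l * m + r) %/ m)%N = l.
    by rewrite divnMDl ?divn_small ?addn0 //; apply: leq_ltn_trans (ltn_ord r).
  by rewrite !blockE.
Qed.

Section ExpTopology.
Variables (L : choiceType) (n : nat) (tau : set (set (exp_n L n))).
Hypotheses (n_gt0 : (0 < n)%N) (top : is_topology tau) (T1 : T1_topology tau)
  (shift_cont : shift_continuous tau).

Definition exp_empty : exp_n L n := exist _ fset0 (leq0n n).

Definition exp_set1 (a : L) : exp_n L n :=
  exist _ [fset a] (leq_trans (eq_leq (cardfs1 a)) n_gt0).

Lemma exp_meet_idPl (A B : exp_n L n) : (val A `<=` val B)%fset -> exp_meet A B = A.
Proof. by move/fsetIidPl => AB; apply: val_inj. Qed.

Lemma exp_meet_set1 (a : L) (y : exp_n L n) :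
  exp_meet (exp_set1 a) y = if a \in val y then exp_set1 a else exp_empty.
Proof.
apply: val_inj; case: ifP => ay /=; first by apply/fsetIidPl; rewrite fsub1set.
by apply/eqP; rewrite -[_ == _]/[disjoint _ & _]%fset fdisjoint1X ay.
Qed.

Lemma open_exp_mem (a : L) : tau [set y | a \in val y].
Proof.
have [|O [tO Oa NO0]] := T1 (x := exp_set1 a) (y := exp_empty).
  by move/(congr1 (fun A => a \in val A)); rewrite /= !inE eqxx.
suff -> : [set y | a \in val y] = exp_meet (exp_set1 a) @^-1` O.
  exact: (shift_cont _).1.
by apply/seteqP; split=> y /=; rewrite exp_meet_set1; case: ifP.
Qed.

Lemma open_exp_subset_seq (s : seq L) : tau [set y | {subset s <= val y}].
Proof.
elim: s => [|a s IHs].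
  suff -> : [set y : exp_n L n | {subset [::] <= val y}] = setT.
    exact: open_setT.
  by rewrite -subTset.
suff -> : [set y : exp_n L n | {subset a :: s <= val y}] =
          [set y | a \in val y] `&` [set y | {subset s <= val y}].
  exact: open_setI (open_exp_mem a) IHs.
apply/seteqP; split=> y /=.
  by move=> sub; split=> [|b bs]; apply: sub; rewrite inE ?eqxx ?bs ?orbT.
by case=> ay sub b; rewrite inE => /orP[/eqP->|/sub].
Qed.

Lemma open_exp_supset (z : exp_n L n) : tau [set y | (val z `<=` val y)%fset].
Proof.
suff -> : [set y : exp_n L n | (val z `<=` val y)%fset] =
          [set y | {subset val z <= val y}].
  exact: open_exp_subset_seq.
by apply/seteqP; split=> y /fsubsetP.
Qed.

Lemma isolated_exp_full (z : exp_n L n) : #|` val z| = n -> isolated tau z.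
Proof.
move=> z_full; rewrite /isolated.
suff <- : [set y : exp_n L n | (val z `<=` val y)%fset] = [set z].
  exact: open_exp_supset.
apply/seteqP; split=> y /=; last by move->.
move=> zy; apply: val_inj; apply/eqP; rewrite eq_sym eqEfcard zy z_full.
exact: (valP y).
Qed.

Definition full_block_extensions (x : exp_n L n) (w : nat -> exp_n L n) :=
  [/\ forall i, #|` val (w i)| = n, forall i, (val x `<=` val (w i))%fset &
      forall i j b, b \in val (w i) -> b \in val (w j) -> b \notin val x -> i = j].

Lemma exists_full_block_extensions (x : exp_n L n) : infinite_set [set: L] ->
  exists w, full_block_extensions x w.
Proof.
move=> L_inf.
have [A [cardA disjA blockA]] := infinite_disjoint_fsets (val x) (n - #|` val x|) L_inf.
have card_xA i : #|` (val x `|` A i)%fset| = n.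
  have := cardfsUI (val x) (A i).
  rewrite fsetIC (eqP (disjA i)) cardfs0 addn0 cardA => ->.
  by rewrite subnKC // (valP x).
exists (fun i => exist _ (val x `|` A i)%fset (eq_leq (card_xA i))); split=> //= i.
  exact: fsubsetUl.
move=> j b; rewrite !inE => + + /negPf bx; rewrite bx /=; exact: blockA.
Qed.

Lemma full_block_extensions_inj x w : (#|` val x| < n)%N ->
  full_block_extensions x w -> injective w.
Proof.
move=> x_small [w_full _ w_blocks] i j wij.
have [b bi bx] : exists2 b, b \in val (w i) & b \notin val x.
  apply/fsubsetPn; apply: contraTN x_small => /fsubset_leq_card.
  by rewrite w_full leqNgt.
by apply: (w_blocks _ _ _ bi _ bx); rewrite -wij.
Qed.

Lemma full_block_extensions_discrete x w :
  isolated tau x -> (#|` val x| < n)%N -> full_block_extensions x w ->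
  discrete_seq tau w.
Proof.
move=> x_open x_small [w_full x_w w_blocks] z.
have [xz|xNz] := boolP (val x `<=` val z)%fset; last first.
  have xzNx : exp_meet x z <> x by move/(congr1 val)/fsetIidPl; apply/negP.
  have [O [tO Oxz NOx]] := T1 xzNx.
  exists (exp_meet x @^-1` O); split=> // [|i]; first exact: (shift_cont x).1.
  by rewrite /= exp_meet_idPl ?x_w.
have [->|zNx] := pselect (z = x).
  exists [set x]; split=> // i j /= wx.
  by move: x_small; rewrite -wx w_full ltnn.
have [b bz bx] : exists2 b, b \in val z & b \notin val x.
  apply/fsubsetPn/negP => zx; apply: zNx; apply: val_inj.
  by apply/eqP; rewrite eqEfsubset zx xz.
exists [set y | (val z `<=` val y)%fset].
split; [exact: open_exp_supset | exact: fsubset_refl |].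
move=> i j /fsubsetP/(_ b bz) bi /fsubsetP/(_ b bz) bj.
exact: (w_blocks _ _ _ bi bj bx).
Qed.

Lemma exp_not_isolated (x : exp_n L n) : infinite_set [set: L] ->
  d_feebly_compact tau -> (#|` val x| < n)%N -> ~ isolated tau x.
Proof.
move=> L_inf dfc x_small x_open.
have [w w_ext] := exists_full_block_extensions x L_inf.
apply: (d_feebly_compact_discrete_seq dfc (full_block_extensions_inj x_small w_ext)).
  by case: w_ext => w_full _ _ i; apply: isolated_exp_full.
exact: full_block_extensions_discrete x_open x_small w_ext.
Qed.

End ExpTopology.

Theorem corollary6 (L : choiceType) (n : nat) (tau : set (set (exp_n L n))) :
  (0 < n)%N -> infinite_set [set: L] ->
  is_topology tau -> T1_topology tau -> shift_continuous tau ->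
  d_feebly_compact tau ->
  forall x : exp_n L n, isolated tau x <-> #|` val x| = n.
Proof.
move=> n_gt0 L_inf top T1 shift_cont dfc x; split; last first.
  exact: isolated_exp_full.
move=> x_open; apply/eqP; rewrite eqn_leq (valP x) leqNgt /=; apply/negP => x_small.
exact: exp_not_isolated x_small x_open.
Qed.
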